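(* Let $G$ be an undirected weighted graph with at least one edge of positive weight. Then $\mathsf{OPT}^{\text{max-min}}(G)=\frac{\mathsf{OPT}_2(G)}{2}$.
   Context: Weighted modularity: $G=(V,E,\ell)$ is an undirected graph with nonnegative edge weights $\ell$; $a_{u,v}=\ell(u,v)$ if $\{u,v\}\in E$ and $0$ otherwise; $d_u=\sum_{v}a_{u,v}$ is the weighted degree, and $m=\frac12\sum_v d_v$. For $C\subseteq V$, $\mathsf M(C)=\frac{1}{2m}\sum_{u\in C}\sum_{v\in C}\big(a_{u,v}-\frac{d_ud_v}{2m}\big)$, the sum over all ordered pairs including $u=v$. A clustering is a partition $\mathcal S$ of $V$ into nonempty clusters. The sum modularity is $\mathsf M(\mathcal S)=\sum_{C\in\mathcal S}\mathsf M(C)$ and $\mathsf{OPT}_2$ is its maximum over clusterings with at most two clusters. The max-min modularity is $\mathsf M^{\text{max-min}}(\mathcal S)=\min_{C\in\mathcal S}\mathsf M(C)$, and $\mathsf{OPT}^{\text{max-min}}$ is its maximum over all clusterings (any number of clusters). *)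

From HB Require Import structures.
From mathcomp Require Import all_boot all_order all_algebra.
Set Implicit Arguments. Unset Strict Implicit. Unset Printing Implicit Defensive.
Import Order.TTheory GRing.Theory Num.Theory.
Local Open Scope ring_scope.

Section Modularity.
Variables (R : realFieldType) (V : finType) (a : V -> V -> R).

Definition wdeg (u : V) : R := \sum_(v : V) a u v.

Definition wm : R := (\sum_(v : V) wdeg v) / 2%:R.

Definition modC (C : {set V}) : R :=
  (2%:R * wm)^-1 *
  \sum_(u in C) \sum_(v in C) (a u v - wdeg u * wdeg v / (2%:R * wm)).

Definition clustering (P : {set {set V}}) : bool := partition P [set: V].

Definition sum_mod (P : {set {set V}}) : R := \sum_(C in P) modC C.

Definition is_maxmin_val (P : {set {set V}}) (x : R) : Prop :=
  (exists2 C, C \in P & modC C = x) /\ (forall C, C \in P -> x <= modC C).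

Definition is_max (S : R -> Prop) (x : R) : Prop :=
  S x /\ (forall y, S y -> y <= x).

Definition is_OPT_maxmin (x : R) : Prop :=
  is_max (fun y => exists2 P, clustering P & is_maxmin_val P y) x.

Definition is_OPT2 (x : R) : Prop :=
  is_max (fun y => exists2 P, clustering P && (#|P| <= 2)%N & sum_mod P = y) x.

End Modularity.

From HB Require Import structures.
From mathcomp Require Import all_boot all_order all_algebra.
From mathcomp Require Import ring.
Import Order.TTheory GRing.Theory Num.Theory.
Local Open Scope ring_scope.
Set Implicit Arguments.
Unset Strict Implicit.

(* Writing cut(C, B) for the weight between C and B and vol(C) for the total
   degree of C, one has M(C) = (cut(C,C) - vol(C)^2 / 2m) / 2m.  Since
   cut(C,C) = vol(C) - cut(C,~C) and vol(V) = vol(C) + vol(~C), this gives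
   M(V) = 0 and M(~C) = M(C).  Hence for any set C, the clustering {C, ~C}
   (or {V} when C is trivial) has sum modularity 2 M(C) and max-min modularity
   M(C).  Taking C maximising M, both optima are attained there: a cluster of
   any clustering has modularity at most M(C), and at most two of them are
   summed in OPT_2. *)

Section CutVolume.
Variables (R : realFieldType) (V : finType) (a : V -> V -> R).

Definition cut (C B : {set V}) : R := \sum_(u in C) \sum_(v in B) a u v.
Definition vol (C : {set V}) : R := \sum_(u in C) wdeg a u.

Lemma vol_cutT C : vol C = cut C setT.
Proof.
by apply: eq_bigr => u _; apply: eq_bigl => v; rewrite in_setT.
Qed.

Lemma cutT_split C B : cut C setT = cut C B + cut C (~: B).
Proof.
rewrite /cut -big_split /=; apply: eq_bigr => u _.
by rewrite (bigID (mem B)) /=; congr (_ + _); apply: eq_bigl => v;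
  rewrite ?in_setT ?in_setC.
Qed.

Lemma vol_split C : vol setT = vol C + vol (~: C).
Proof.
by rewrite /vol (bigID (mem C)) /=; congr (_ + _); apply: eq_bigl => v;
  rewrite ?in_setT ?in_setC.
Qed.

Lemma two_wm : 2%:R * wm a = vol setT.
Proof.
rewrite /wm mulrC divfK ?pnatr_eq0 //.
by apply: eq_bigl => v; rewrite in_setT.
Qed.

Lemma modC_cut C :
  modC a C = (vol setT)^-1 * (cut C C - vol C ^+ 2 / vol setT).
Proof.
rewrite /modC two_wm; congr (_ * _).
under eq_bigr => u _ do rewrite sumrB.
rewrite sumrB expr2 -mulrA mulr_suml; congr (_ - _).
by apply: eq_bigr => u _; rewrite mulrA mulr_sumr mulr_suml.
Qed.

Lemma modC_setT : modC a setT = 0.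
Proof.
rewrite modC_cut -vol_cutT.
have [->|vol_neq0] := eqVneq (vol setT) 0; first by rewrite invr0 mul0r.
by rewrite expr2 mulfK // subrr mulr0.
Qed.

Lemma modC_set0 : modC a set0 = 0.
Proof. by rewrite /modC big_set0 mulr0. Qed.

Hypothesis a_sym : forall u v, a u v = a v u.

Lemma cut_sym C B : cut C B = cut B C.
Proof.
rewrite /cut exchange_big /=.
by apply: eq_bigr => u _; apply: eq_bigr => v _.
Qed.

Lemma modC_setC C : modC a (~: C) = modC a C.
Proof.
have cutC : cut C C = vol C - cut C (~: C).
  by rewrite vol_cutT (cutT_split C C) addrK.
have cutCC : cut (~: C) (~: C) = vol (~: C) - cut C (~: C).
  by rewrite vol_cutT (cutT_split (~: C) C) (cut_sym (~: C) C) addrAC subrr add0r.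
rewrite !modC_cut cutC cutCC (vol_split C).
have [->|vol_neq0] := eqVneq (vol C + vol (~: C)) 0.
  by rewrite invr0 !mul0r.
by field.
Qed.

End CutVolume.

Section Clusterings.
Variable V : finType.

Lemma clustering_setT (w : V) : clustering [set [set: V]].
Proof.
rewrite /clustering /partition /cover big_set1 eqxx /=.
rewrite in_set1 eq_sym; apply/andP; split.
  by apply/trivIsetP => A B /set1P -> /set1P ->; rewrite eqxx.
by apply/eqP => /setP/(_ w); rewrite in_set0 in_setT.
Qed.

Lemma setC_neq (w : V) (C : {set V}) : C != ~: C.
Proof.
by apply/eqP => /setP/(_ w); rewrite in_setC; case: (w \in C).
Qed.

Lemma clustering_setC (C : {set V}) :
  C != set0 -> C != setT -> clustering [set C; ~: C].
Proof.
move=> C_neq0 C_neqT; have [w _] := set0Pn _ C_neq0.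
rewrite /clustering /partition; apply/and3P; split.
- by rewrite /cover big_setU1 ?big_set1 /= ?setUCr // in_set1 (setC_neq w).
- apply/trivIsetP => A B /set2P [] -> /set2P [] -> //; rewrite ?eqxx // => _.
    by rewrite disjoints_subset setCK.
  by rewrite disjoints_subset.
- by rewrite in_set2 negb_or eq_sym C_neq0 eq_sym -setCT (inj_eq (@setC_inj _)).
Qed.

End Clusterings.

Section Bipartition.
Variables (R : realFieldType) (V : finType) (a : V -> V -> R).
Hypothesis a_sym : forall u v, a u v = a v u.

Lemma exists_bipartition (w : V) (C : {set V}) :
  exists2 P, clustering P && (#|P| <= 2)%N &
    sum_mod a P = modC a C *+ 2 /\ is_maxmin_val a P (modC a C).
Proof.
case: (boolP ((C == set0) || (C == setT))) => [trivC|].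
  have modC0 : modC a C = 0.
    by case/orP: trivC => /eqP ->; rewrite ?modC_set0 ?modC_setT.
  exists [set [set: V]]; first by rewrite (clustering_setT w) cards1.
  rewrite modC0 mul0rn /sum_mod big_set1 modC_setT; split => //.
  split; first by exists setT; rewrite ?in_set1 ?modC_setT.
  by move=> B /set1P ->; rewrite modC_setT.
rewrite negb_or => /andP [C_neq0 C_neqT].
exists [set C; ~: C]; first by rewrite clustering_setC // cards2 (setC_neq w).
split; first by rewrite /sum_mod big_setU1 ?big_set1 ?in_set1 ?(setC_neq w)
  //= modC_setC // mulr2n.
split; first by exists C; rewrite ?in_set2 ?eqxx.
by move=> B /set2P [] ->; rewrite ?modC_setC.
Qed.

End Bipartition.

Lemma sum_mod_le (R : realFieldType) (V : finType) (a : V -> V -> R)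
    (P : {set {set V}}) (m : R) :
  (forall C, C \in P -> modC a C <= m) -> sum_mod a P <= m *+ #|P|.
Proof. by move=> le_m; rewrite -sumr_const; apply: ler_sum. Qed.

Theorem lemma12 (R : realFieldType) (V : finType) (a : V -> V -> R)
  (a_sym : forall u v, a u v = a v u)
  (a_nneg : forall u v, 0 <= a u v)
  (a_noloop : forall u, a u u = 0)
  (a_edge : exists u v, 0 < a u v) :
  exists x y, is_OPT_maxmin a x /\ is_OPT2 a y /\ x = y / 2%:R.
Proof.
have [w _] := a_edge.
have [C0 _ C0_max] := @arg_maxP _ R {set V} setT predT (modC a) isT.
have {}C0_max C : modC a C <= modC a C0 by exact: C0_max.
have C0_ge0 : 0 <= modC a C0 by rewrite -(modC_setT a) C0_max.
have [P P_2 [P_sum P_min]] := exists_bipartition a_sym w C0.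
exists (modC a C0), (modC a C0 *+ 2); split; last split.
- split; first by exists P => //; case/andP: P_2.
  by move=> x [Q _ [[C _ <-] _]].
- split; first by exists P.
  move=> y [Q /andP [_ Q_2] <-].
  by apply: le_trans (sum_mod_le (fun C _ => C0_max C)) _; exact: ler_wpMn2l.
- by rewrite -[_ *+ 2]mulr_natr mulfK ?pnatr_eq0.
Qed.
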